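(* Let $h:\mathbb{R}^d\to\mathbb{R}^{d_\eta}$ be an encoder and let $g$ be a final linear-softmax classification layer for two classes $A,B$, with logits $\boldsymbol{\mathrm{w}}_A^{\top}\boldsymbol{z}+b_A$ and $\boldsymbol{\mathrm{w}}_B^{\top}\boldsymbol{z}+b_B$ on a latent vector $\boldsymbol{z}\in\mathbb{R}^{d_\eta}$. Set $\boldsymbol{\mathrm{w}}=\boldsymbol{\mathrm{w}}_A-\boldsymbol{\mathrm{w}}_B$ and $b=b_A-b_B$, so that the separating hyperplane between classes $A$ and $B$ is $\{\boldsymbol{z}:\boldsymbol{\mathrm{w}}^{\top}\boldsymbol{z}+b=0\}$, and $g(\boldsymbol{z})=A$ if $\boldsymbol{\mathrm{w}}^{\top}\boldsymbol{z}+b>0$ and $g(\boldsymbol{z})=B$ otherwise. Let $f=g\circ h$ be the resulting binary classifier, and let $p(A\mid\boldsymbol{x},f)=\dfrac{e^{\boldsymbol{\mathrm{w}}_A^{\top}\boldsymbol{z}+b_A}}{e^{\boldsymbol{\mathrm{w}}_A^{\top}\boldsymbol{z}+b_A}+e^{\boldsymbol{\mathrm{w}}_B^{\top}\boldsymbol{z}+b_B}}$ with $\boldsymbol{z}=h(\boldsymbol{x})$ denote the softmax probability of class $A$ output by $f$ at an input $\boldsymbol{x}\in\mathbb{R}^d$. Let $\mathcal{T}(\boldsymbol{x})\sim\tau$ be a randomized transformation of the input $\boldsymbol{x}$, suppose $f(\boldsymbol{x})=A$, and let $$p_A=\mathbb{P}_{\mathcal{T}(\boldsymbol{x})}\big(f(\mathcal{T}(\boldsymbol{x}))=A\big)$$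 be the probability of obtaining the original class under the transformation. Let $\epsilon_\eta=h(\mathcal{T}(\boldsymbol{x}))-h(\boldsymbol{x})$ be the induced perturbation of the latent representation, and let $\rho$ be the distribution of the real random variable $\boldsymbol{\mathrm{w}}^{\top}\epsilon_\eta$, with cumulative distribution function $F$. Assume that the inverse $F^{-1}$ of $F$ exists and that $\rho$ has mean zero. Then $$p(A\mid\boldsymbol{x},f)=\frac{1}{1+e^{F^{-1}(1-p_A)}}.$$
   Context: Here $\boldsymbol{x}$ is an input image, $f$ a neural network used for binary classification decomposed as $f=g\circ h$ with $h$ the encoder (all layers up to the final classification layer) and $g$ the final classification layer. The random transformation $\mathcal{T}$ is arbitrary (e.g. additive noise, rotations, elastic deformations); the only randomness is in $\mathcal{T}(\boldsymbol{x})$. *)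

From HB Require Import structures.
From mathcomp Require Import all_boot all_order all_algebra.
From mathcomp Require Import all_classical all_reals all_analysis.
Set Implicit Arguments. Unset Strict Implicit. Unset Printing Implicit Defensive.
Import Order.TTheory GRing.Theory Num.Theory.
Local Open Scope ring_scope.
Local Open Scope classical_set_scope.

Inductive cls := ClassA | ClassB.

Definition dotv (R : ringType) (n : nat) (w z : 'rV[R]_n) : R := (w *m z^T) 0 0.

Definition gcls (R : realType) (n : nat) (wA wB : 'rV[R]_n) (bA bB : R)
  (z : 'rV[R]_n) : cls :=
  if 0 < dotv (wA - wB) z + (bA - bB) then ClassA else ClassB.

Definition softmaxA (R : realType) (n : nat) (wA wB : 'rV[R]_n) (bA bB : R)
  (z : 'rV[R]_n) : R :=
  expR (dotv wA z + bA) / (expR (dotv wA z + bA) + expR (dotv wB z + bB)).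

Definition cdfR d (T : measurableType d) (R : realType) (P : probability T R)
  (X : T -> R) (t : R) : R := fine (P (X @^-1` `]-oo, t])).

From HB Require Import structures.
From mathcomp Require Import all_boot all_order all_algebra.
From mathcomp Require Import all_classical all_reals all_analysis.
From mathcomp Require Import ring lra.
Set Implicit Arguments. Unset Strict Implicit. Unset Printing Implicit Defensive.
Import Order.TTheory GRing.Theory Num.Theory.
Local Open Scope ring_scope.
Local Open Scope classical_set_scope.

(* The two-class softmax is the logistic function of the margin
   [c = w^T h(x) + b], and [f (T x) = A] exactly when the latent shift
   [w^T eps] exceeds [-c]; hence [1 - pA = F (-c)], i.e. [-c = F^-1 (1 - pA)],
   and the softmax equals [1 / (1 + exp (-c))]. *)

Lemma dotvBl (R : nzRingType) n (w v z : 'rV[R]_n) :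
  dotv (w - v) z = dotv w z - dotv v z.
Proof. by rewrite /dotv mulmxBl !mxE. Qed.

Lemma dotvBr (R : nzRingType) n (w z y : 'rV[R]_n) :
  dotv w (z - y) = dotv w z - dotv w y.
Proof. by rewrite /dotv linearB mulmxBr !mxE. Qed.

Lemma expR_div_add (R : realType) (a b : R) :
  expR a / (expR a + expR b) = 1 / (1 + expR (b - a)).
Proof.
have ea0 : expR a != 0 by rewrite gt_eqF ?expR_gt0.
have eab0 : expR a + expR b != 0 by rewrite gt_eqF ?addr_gt0 ?expR_gt0.
by rewrite expRB; field; rewrite ea0 eab0.
Qed.

Lemma softmaxA_logistic (R : realType) n (wA wB : 'rV[R]_n) (bA bB : R)
    (z : 'rV[R]_n) :
  softmaxA wA wB bA bB z = 1 / (1 + expR (- (dotv (wA - wB) z + (bA - bB)))).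
Proof.
by rewrite /softmaxA expR_div_add dotvBl; congr (1 / (1 + expR _)); ring.
Qed.

Lemma gcls_shiftE (R : realType) n (wA wB : 'rV[R]_n) (bA bB : R)
    (z y : 'rV[R]_n) :
  (gcls wA wB bA bB y = ClassA) <->
  - (dotv (wA - wB) z + (bA - bB)) < dotv (wA - wB) (y - z).
Proof.
rewrite /gcls dotvBr.
case: (ltrP 0 (dotv (wA - wB) y + (bA - bB))) => margin; split=> // shift.
- lra.
- exfalso; lra.
Qed.

Lemma cdfR_complement d (T : measurableType d) (R : realType)
    (P : probability T R) (X : T -> R) (t : R) :
  measurable_fun setT X ->
  fine (P [set om | t < X om]) = 1 - cdfR P X t.
Proof.
move=> mX.
have mXle : measurable (X @^-1` `]-oo, t]).
  by rewrite -[X @^-1` _]setTI; apply: mX => //; exact: measurable_itv.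
have -> : [set om | t < X om] = ~` (X @^-1` `]-oo, t]).
  by apply/seteqP; split => om /=; rewrite in_itv /= ltNge => /negP.
by rewrite probability_setC // /cdfR fineB ?fin_num_measure.
Qed.

Theorem proposition2
  (R : realType) (d de : nat)
  (h : 'rV[R]_d -> 'rV[R]_de)
  (wA wB : 'rV[R]_de) (bA bB : R)
  (x : 'rV[R]_d)
  (dT : measure_display) (Omega : measurableType dT) (P : probability Omega R)
  (Tx : Omega -> 'rV[R]_d)
  (Finv : R -> R) :
  let f := fun y => gcls wA wB bA bB (h y) in
  let X := fun om => dotv (wA - wB) (h (Tx om) - h x) in
  let F := cdfR P X in
  let pA := fine (P [set om | f (Tx om) = ClassA]) in
  measurable_fun setT X ->
  (forall t, Finv (F t) = t) ->
  P.-integrable setT (EFin \o X) ->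
  ('E_P[X] = 0)%E ->
  f x = ClassA ->
  softmaxA wA wB bA bB (h x) = 1 / (1 + expR (Finv (1 - pA))).
Proof.
move=> f X F pA mX FK _ _ _.
set c := dotv (wA - wB) (h x) + (bA - bB).
have eventA : [set om | f (Tx om) = ClassA] = [set om | - c < X om].
  by apply/funext => om; apply/propext; exact: gcls_shiftE.
rewrite /pA eventA cdfR_complement // subKr FK.
exact: softmaxA_logistic.
Qed.
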